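(* Let $G$ be a graph and let $n\geq 2$. Then the set of distinct Laplacian eigenvalues of the blow-up $\uparrow^{n}G$ is $$\sigma\left(\uparrow^{n}G\right)=n\cdot\sigma(G)\cup \{n\, d_u:u\in V(G)\}.$$ Moreover, for any vertex $u$ of $G$ and any $j\in\mathbb{Z}_n$, $$\sigma_{(j,u)}\left(\uparrow^{n}G\right)=n\cdot\sigma_u(G)\cup\{n\, d_u\}.$$
   Context: All graphs are simple, undirected and unweighted. For a graph $G$ with vertex set $V$, $d_u$ is the degree of vertex $u$, and $L=D-A$ is its Laplacian matrix ($D$ the diagonal degree matrix, $A$ the adjacency matrix). $\sigma(G)$ denotes the set of distinct Laplacian eigenvalues of $G$. If $L=\sum_{\lambda\in\sigma(G)}\lambda E_\lambda$ is the spectral decomposition ($E_\lambda$ the orthogonal projection onto the $\lambda$-eigenspace), the eigenvalue support of a vertex $u$ is $\sigma_u(G)=\{\lambda\in\sigma(G): E_\lambda\mathbf{e}_u\neq \mathbf{0}\}$. For a set $S$ of numbers, $n\cdot S=\{ns:s\in S\}$. The blow-up $\uparrow^{n}G$ of $n$ copies of $G$ is the graph with vertex set $\mathbb{Z}_n\times V$, in which $(l,u)$ and $(m,v)$ are adjacent if and only if $u$ and $v$ are adjacent in $G$. *)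

From mathcomp Require Import all_boot all_order all_algebra.
From mathcomp Require Export reals.
Set Implicit Arguments. Unset Strict Implicit. Unset Printing Implicit Defensive.
Import Order.TTheory GRing.Theory Num.Theory.
Local Open Scope ring_scope.

(* A simple graph on a finite vertex type V is given by an adjacency
   relation adj : rel V, assumed symmetric and irreflexive (hypotheses of
   the theorem). *)

Section Graphs.
Variable R : realType.
Variable V : finType.
Variable adj : rel V.

Definition deg (u : V) : nat := #|[set v | adj u v]|.

Definition lap (u v : V) : R :=
  (if u == v then (deg u)%:R else 0) - (if adj u v then 1 else 0).

Definition lapv (x : V -> R) : V -> R := fun u => \sum_(v : V) lap u v * x v.

Definition in_eigenspace (lam : R) (x : V -> R) : Prop :=
  forall u, lapv x u = lam * x u.

Definition lap_eigenvalue (lam : R) : Prop :=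
  exists x : V -> R, (exists u, x u != 0) /\ in_eigenspace lam x.

Definition dotv (x y : V -> R) : R := \sum_(v : V) x v * y v.
Definition evec (u : V) : V -> R := fun v => if v == u then 1 else 0.

(* p = E_lambda y : the orthogonal projection of y onto the lambda-eigenspace,
   i.e. p is in the eigenspace and y - p is orthogonal to it. *)
Definition is_eproj (lam : R) (y p : V -> R) : Prop :=
  in_eigenspace lam p /\
  forall x, in_eigenspace lam x -> dotv (fun v => y v - p v) x = 0.

Definition eig_support (u : V) (lam : R) : Prop :=
  lap_eigenvalue lam /\
  exists p : V -> R, is_eproj lam (evec u) p /\ exists v, p v != 0.

End Graphs.

(* blow-up of n copies: vertex set Z_n x V (Z_n represented by 'I_n),
   (l,u) ~ (m,v) iff u ~ v in G *)
Definition blowup (n : nat) (V : finType) (adj : rel V) : rel ('I_n * V)%type :=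
  fun x y => adj x.2 y.2.
Arguments blowup n {V} adj.

From mathcomp Require Import all_boot all_order all_algebra.
From mathcomp Require Import reals.

(* Summing the eigen-equation of
   the blow-up over the fibre {(l, u) | l} shows that the fibre sums of a
   mu-eigenvector X form a (mu / n)-eigenvector of G.  If all fibre sums vanish,
   the eigen-equation at (l, u) collapses to (n d_u - mu) X(l, u) = 0, so
   mu = n d_u.  Conversely, a lam-eigenvector of G lifted constantly along the
   fibres is an (n lam)-eigenvector, and e_(j,u) - e_(k,u) is an
   (n d_u)-eigenvector.  For supports, E_mu e_w <> 0 exactly when some
   mu-eigenvector is nonzero at w; if mu <> n d_u, the same collapsed equation
   makes a mu-eigenvector constant on the fibre of u, so its fibre sum at u is
   n X(j, u). *)

Set Implicit Arguments.
Unset Strict Implicit.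
Unset Printing Implicit Defensive.

Import Order.TTheory GRing.Theory Num.Theory.
Local Open Scope ring_scope.

Lemma sum_sqr_eq0 (F : realDomainType) (I : finType) (x : I -> F) :
  \sum_i x i ^+ 2 = 0 -> forall i, x i = 0.
Proof.
move/psumr_eq0P => x2_0 i; apply/eqP; rewrite -sqrf_eq0.
by rewrite x2_0 // => j _; exact: sqr_ge0.
Qed.

Lemma mulmx_tr_eq0 (F : realFieldType) (N : nat) (x : 'rV[F]_N) :
  x *m x^T = 0 -> x = 0.
Proof.
move/(congr1 (fun M : 'M[F]_1 => M 0 0)); rewrite !mxE => xx0.
apply/rowP => j; rewrite mxE; apply: sum_sqr_eq0 j.
by rewrite -[RHS]xx0; apply: eq_bigr => k _; rewrite mxE expr2.
Qed.

Lemma sym_mx_ker_img_decomposition (F : realFieldType) (N : nat) (A : 'M[F]_N) :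
  A^T = A -> forall y : 'rV[F]_N, exists p z : 'rV[F]_N, p *m A = 0 /\ y = p + z *m A.
Proof.
move=> symA y.
have cap0 : (kermx A :&: A = 0)%MS.
  apply/eqP; rewrite -submx0; apply/rV_subP => x.
  rewrite sub_capmx submx0 => /andP[/sub_kermxP xA0 /submxP[w xE]].
  apply/eqP/mulmx_tr_eq0.
  by rewrite {2}xE trmx_mul symA mulmxA xA0 mul0mx.
have full : row_full (kermx A + A)%MS.
  apply/eqP; have := mxrank_sum_cap (kermx A) A.
  by rewrite cap0 mxrank0 addn0 mxrank_ker subnK // rank_leq_row.
have /sub_addsmxP[[u v] /= ->] : (y <= kermx A + A)%MS by exact: submx_full.
by exists (u *m kermx A), v; rewrite -mulmxA mulmx_ker mulmx0.
Qed.

Lemma sym_form_ker_img_decomposition (F : realFieldType) (I : finType)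
    (M : I -> I -> F) :
  (forall i j, M i j = M j i) -> forall y : I -> F,
  exists p z : I -> F, (forall i, \sum_j M i j * p j = 0) /\
    forall j, y j = p j + \sum_i z i * M i j.
Proof.
move=> symM y.
have sum_enum (G : I -> F) : \sum_i G i = \sum_(k < #|I|) G (enum_val k).
  by rewrite (reindex _ (onW_bij _ (@enum_val_bij I))).
pose A : 'M[F]_#|I| := \matrix_(k, l) M (enum_val k) (enum_val l).
have symA : A^T = A by apply/matrixP => k l; rewrite !mxE symM.
have [p [z [pA0 yE]]] := sym_mx_ker_img_decomposition symA (\row_k y (enum_val k)).
exists (fun i => p 0 (enum_rank i)), (fun i => z 0 (enum_rank i)); split.
- move=> i; have /rowP/(_ (enum_rank i)) := pA0; rewrite !mxE => pA0i.
  rewrite -[RHS]pA0i sum_enum; apply: eq_bigr => k _.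
  by rewrite enum_valK mxE enum_rankK symM mulrC.
- move=> j; have /rowP/(_ (enum_rank j)) := yE; rewrite !mxE enum_rankK => ->.
  congr (_ + _); rewrite sum_enum; apply: eq_bigr => k _.
  by rewrite enum_valK mxE enum_rankK.
Qed.

Section Laplacian.
Variables (R : realType) (V : finType) (adj : rel V).

Lemma lapvE (x : V -> R) u :
  lapv adj x u = (deg adj u)%:R * x u - \sum_(v | adj u v) x v.
Proof.
rewrite /lapv; under eq_bigr do rewrite /lap mulrBl; rewrite sumrB [in RHS]big_mkcond.
congr (_ - _); last by apply: eq_bigr => v _; case: ifP; rewrite ?mul1r ?mul0r.
rewrite (bigD1 u) //= eqxx big1 ?addr0 // => v; rewrite eq_sym => /negbTE ->.
by rewrite mul0r.
Qed.

Lemma dotv_evec u (x : V -> R) : dotv (evec R u) x = x u.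
Proof.
rewrite /dotv (bigD1 u) //= /evec eqxx mul1r big1 ?addr0 // => v /negbTE ->.
by rewrite mul0r.
Qed.

Lemma eproj_neq0P (lam : R) (y p : V -> R) : is_eproj adj lam y p ->
  (exists v, p v != 0) <-> exists2 x, in_eigenspace adj lam x & dotv y x != 0.
Proof.
move=> [pE yp_perp]; split=> [[v pv0] | [x xE yx0]].
  exists p => //; apply: contra pv0 => yp0; apply/eqP; move: v; apply: sum_sqr_eq0.
  have -> : \sum_v p v ^+ 2 = dotv y p - dotv (fun v => y v - p v) p.
    rewrite /dotv -sumrB; apply: eq_bigr => v _.
    by rewrite mulrBl opprB addrC subrK expr2.
  by rewrite (eqP yp0) yp_perp // subrr.
apply/existsP; apply: contraNT yx0 => /existsPn p0.
rewrite -(yp_perp x xE); apply/eqP/eq_bigr => v _.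
by rewrite (eqP (negbNE (p0 v))) subr0.
Qed.

Hypothesis adj_sym : symmetric adj.

Lemma lap_sym u v : lap R adj u v = lap R adj v u.
Proof. by rewrite /lap eq_sym adj_sym; case: eqVneq => // ->. Qed.

Lemma eproj_exists (lam : R) (y : V -> R) : exists p, is_eproj adj lam y p.
Proof.
pose M u v := lap R adj u v - (u == v)%:R * lam.
have M_sym u v : M u v = M v u by rewrite /M lap_sym eq_sym.
have ME (x : V -> R) u : \sum_v M u v * x v = lapv adj x u - lam * x u.
  rewrite /M; under eq_bigr do rewrite mulrBl; rewrite sumrB; congr (_ - _).
  rewrite (bigD1 u) //= eqxx mul1r big1 ?addr0 // => v /negbTE.
  by rewrite eq_sym => ->; rewrite !mul0r.
have [p [z [pE yE]]] := sym_form_ker_img_decomposition M_sym y.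
(* y - p lies in the image of the symmetric form L - lam, which is orthogonal
   to its kernel, the lam-eigenspace. *)
exists p; split=> [u | x xE]; first by apply/eqP; rewrite -subr_eq0 -ME pE.
have -> : dotv (fun v => y v - p v) x = \sum_u z u * \sum_v M u v * x v.
  rewrite /dotv; under [RHS]eq_bigr do rewrite mulr_sumr.
  rewrite [RHS]exchange_big; apply: eq_bigr => v _.
  by rewrite yE addrC addKr mulr_suml; apply: eq_bigr => u _; rewrite mulrA.
by apply: big1 => u _; rewrite ME xE subrr mulr0.
Qed.

Lemma eig_supportE u (lam : R) :
  eig_support adj u lam <-> exists2 x, in_eigenspace adj lam x & x u != 0.
Proof.
split=> [[_ [p [pP /(eproj_neq0P pP)[x xE]]]] | [x xE xu0]].
  by rewrite dotv_evec; exists x.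
split; first by exists x; split=> //; exists u.
have [p pP] := eproj_exists lam (evec R u); exists p; split => //.
by apply/(eproj_neq0P pP); exists x; rewrite ?dotv_evec.
Qed.

End Laplacian.

Section BlowUp.
Variables (R : realType) (V : finType) (adj : rel V) (n : nat).
Local Notation B := (blowup n adj).

Definition fiber_sum (X : 'I_n * V -> R) (v : V) : R := \sum_(m < n) X (m, v).

Lemma deg_blowup l u : deg B (l, u) = (n * deg adj u)%N.
Proof.
rewrite /deg -[n in (n * _)%N]card_ord -cardsT -cardsX.
by apply: eq_card => -[m v]; rewrite !inE.
Qed.

Lemma lapv_blowup (X : 'I_n * V -> R) l u :
  lapv B X (l, u) = (n * deg adj u)%:R * X (l, u) - \sum_(v | adj u v) fiber_sum X v.
Proof.
rewrite lapvE deg_blowup; congr (_ - _).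
by rewrite /fiber_sum exchange_big pair_big; apply: eq_big => -[m v].
Qed.

Lemma eigenspace_blowup (lam : R) (x : V -> R) :
  in_eigenspace adj lam x -> in_eigenspace B (n%:R * lam) (fun y => x y.2).
Proof.
move=> xE [l u]; rewrite lapv_blowup /= -mulrA -xE lapvE.
have fiberE v : fiber_sum (fun y => x y.2) v = n%:R * x v.
  by rewrite /fiber_sum /= sumr_const card_ord mulr_natl.
under eq_bigr do rewrite fiberE.
by rewrite -mulr_sumr natrM -mulrA -mulrBr.
Qed.

Lemma lapv_fiber_sum (X : 'I_n * V -> R) u :
  n%:R * lapv adj (fiber_sum X) u = \sum_(l < n) lapv B X (l, u).
Proof.
under eq_bigr do rewrite lapv_blowup; rewrite sumrB -mulr_sumr sumr_const card_ord.
by rewrite -/(fiber_sum X u) lapvE mulrBr natrM -mulrA [n%:R * \sum_(_ | _) _]mulr_natl.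
Qed.

Lemma eigenspace_fiber_sum (mu : R) (X : 'I_n * V -> R) : n%:R != 0 :> R ->
  in_eigenspace B mu X -> in_eigenspace adj (mu / n%:R) (fiber_sum X).
Proof.
move=> n0 XE u; apply: (mulfI n0); rewrite lapv_fiber_sum.
under eq_bigr do rewrite XE; rewrite -mulr_sumr.
by rewrite mulrA [n%:R * _]mulrC divfK.
Qed.

Lemma blowup_eigen_fiber (mu : R) (X : 'I_n * V -> R) l u : in_eigenspace B mu X ->
  ((n * deg adj u)%:R - mu) * X (l, u) = \sum_(v | adj u v) fiber_sum X v.
Proof. by move=> XE; rewrite mulrBl -XE lapv_blowup opprB addrC subrK. Qed.

Lemma fiber_sum_evec (j : 'I_n) u v : fiber_sum (evec R (j, u)) v = evec R u v.
Proof.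
rewrite /fiber_sum (bigD1 j) //= big1 => [|m /negbTE mj]; last first.
  by rewrite /evec xpair_eqE mj.
by rewrite /evec xpair_eqE eqxx addr0.
Qed.

Definition fiber_diff (j k : 'I_n) (u : V) (y : 'I_n * V) : R :=
  evec R (j, u) y - evec R (k, u) y.

Lemma fiber_diff_at (j k : 'I_n) u : k != j -> fiber_diff j k u (j, u) = 1.
Proof.
by move=> kj; rewrite /fiber_diff /evec !xpair_eqE !eqxx /= eq_sym (negbTE kj) subr0.
Qed.

Lemma eigenspace_fiber_diff (j k : 'I_n) u :
  in_eigenspace B (n * deg adj u)%:R (fiber_diff j k u).
Proof.
move=> [l w]; rewrite lapv_blowup big1 ?subr0 => [|v _]; last first.
  by rewrite /fiber_sum /fiber_diff sumrB -!/(fiber_sum _ v) !fiber_sum_evec subrr.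
have [-> // | wu] := eqVneq w u.
by rewrite /fiber_diff /evec !xpair_eqE (negbTE wu) !andbF subrr !mulr0.
Qed.

End BlowUp.

Lemma exists_ord_neq (n : nat) (j : 'I_n) : (1 < n)%N -> exists k : 'I_n, k != j.
Proof.
move=> n_gt1; have lt_n : ((j == 0%N :> nat) < n)%N by case: eqP => // _; exact: ltnW.
by exists (Ordinal lt_n); apply/eqP => /(congr1 val) /=; case: eqP => [-> | j_neq0 /esym].
Qed.

Section BlowUpSpectrum.
Variables (R : realType) (V : finType) (adj : rel V) (n : nat).
Hypothesis n_gt1 : (1 < n)%N.
Local Notation B := (blowup n adj).

Let n_neq0 : n%:R != 0 :> R.
Proof. by rewrite pnatr_eq0 -lt0n ltnW. Qed.

Lemma lap_eigenvalue_blowupP (mu : R) :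
  lap_eigenvalue B mu <->
  (exists2 lam, lap_eigenvalue adj lam & mu = n%:R * lam) \/
  (exists u, mu = (n * deg adj u)%:R).
Proof.
pose j : 'I_n := Ordinal n_gt1.
split=> [[X [[[l u] Xlu0] XE]] | [[lam [x [[v xv0] xE]] ->] | [u ->]]].
- have [/existsP[v Xv0] | /existsPn fiber0] := boolP [exists v, fiber_sum X v != 0].
    left; exists (mu / n%:R); last by rewrite mulrC divfK.
    by exists (fiber_sum X); split; [exists v | exact: eigenspace_fiber_sum].
  right; exists u; have := blowup_eigen_fiber l u XE.
  rewrite big1 => [/eqP | v _]; last exact/eqP/negbNE.
  by rewrite mulf_eq0 (negbTE Xlu0) orbF subr_eq0 => /eqP.
- by exists (fun y => x y.2); split; [exists (j, v) | exact: eigenspace_blowup].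
- have [k kj] := exists_ord_neq j n_gt1.
  exists (fiber_diff R j k u); split; last exact: eigenspace_fiber_diff.
  by exists (j, u); rewrite fiber_diff_at ?oner_neq0.
Qed.

Hypothesis adj_sym : symmetric adj.

Lemma eig_support_blowupP u (j : 'I_n) (mu : R) :
  eig_support B (j, u) mu <->
  (exists2 lam, eig_support adj u lam & mu = n%:R * lam) \/
  mu = (n * deg adj u)%:R.
Proof.
have B_sym : symmetric B by move=> x y; rewrite /blowup adj_sym.
rewrite eig_supportE //.
split=> [[X XE Xju0] | [[lam /(eig_supportE adj_sym)[x xE xu0] ->] | ->]].
- have [-> | mu_neq] := eqVneq mu (n * deg adj u)%:R; [by right | left].
  have fiber_const l : X (l, u) = X (j, u).
    have deg_mu_neq0 : (n * deg adj u)%:R - mu != 0 by rewrite subr_eq0 eq_sym.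
    by apply: (mulfI deg_mu_neq0); rewrite !(blowup_eigen_fiber _ _ XE).
  exists (mu / n%:R); last by rewrite mulrC divfK.
  apply/(eig_supportE adj_sym); exists (fiber_sum X); first exact: eigenspace_fiber_sum.
  rewrite /fiber_sum; under eq_bigr do rewrite fiber_const.
  by rewrite sumr_const card_ord -mulr_natl mulf_neq0.
- by exists (fun y => x y.2); first exact: eigenspace_blowup.
- have [k kj] := exists_ord_neq j n_gt1.
  exists (fiber_diff R j k u); first exact: eigenspace_fiber_diff.
  by rewrite fiber_diff_at ?oner_neq0.
Qed.

End BlowUpSpectrum.

Theorem proposition2 (R : realType) (V : finType) (adj : rel V)
    (Hsym : symmetric adj) (Hirr : irreflexive adj) (n : nat) (hn : (2 <= n)%N) :
  (forall mu : R,
     lap_eigenvalue (blowup n adj) mu <->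
     ((exists2 lam : R, lap_eigenvalue adj lam & mu = n%:R * lam) \/
      (exists u : V, mu = (n * deg adj u)%:R)))
  /\
  (forall (u : V) (j : 'I_n) (mu : R),
     eig_support (blowup n adj) (j, u) mu <->
     ((exists2 lam : R, eig_support adj u lam & mu = n%:R * lam) \/
      mu = (n * deg adj u)%:R)).
Proof.
split; [exact: lap_eigenvalue_blowupP | exact: eig_support_blowupP].
Qed.
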